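(* Let $n\ge2$. For a polar $n$-complex number $u=x_0+h_1x_1+\cdots+h_{n-1}x_{n-1}$ let $\nu(u)=\det A$, where $A$ is the $n\times n$ matrix with entries $A_{ij}=x_{(i-j)\bmod n}$, $i,j=0,\dots,n-1$. Then $$\nu(u)=\prod_{k=0}^{n-1}\big(x_0+\epsilon_kx_1+\epsilon_k^2x_2+\cdots+\epsilon_k^{n-1}x_{n-1}\big),\quad \epsilon_k=e^{2\pi i k/n},$$ so that $\nu(u)=v_+v_-\prod_{k=1}^{n/2-1}(v_k^2+\tilde v_k^2)$ for even $n$ and $\nu(u)=v_+\prod_{k=1}^{(n-1)/2}(v_k^2+\tilde v_k^2)$ for odd $n$. Moreover, for any two polar $n$-complex numbers $u',u''$ with product $u=u'u''$: $v_+=v_+'v_+''$; $v_-=v_-'v_-''$ (for even $n$); $v_k=v_k'v_k''-\tilde v_k'\tilde v_k''$ and $\tilde v_k=v_k'\tilde v_k''+\tilde v_k'v_k''$ for $k=1,\dots,\lfloor (n-1)/2\rfloor$; hence $\rho_k=\rho_k'\rho_k''$, $\nu(u)=\nu(u')\nu(u'')$, and if $\nu(u'),\nu(u'')>0$ then the amplitudes satisfy $\rho=\rho'\rho''$. If furthermore $\rho_k',\rho_k''>0$ then $\phi_k\equiv\phi_k'+\phi_k''\pmod{2\pi}$; if $v_+',v_+''\neq0$ then $\tan\theta_+=\frac{1}{\sqrt2}\tan\theta_+'\tan\theta_+''$; for even $n$, if $v_-',v_-''\ne0$ then $\tan\theta_-=\frac{1}{\sqrt2}\tan\theta_-'\tan\theta_-''$;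 and if $\rho_{k}',\rho_{k}''>0$ then $\tan\psi_{k-1}=\tan\psi_{k-1}'\tan\psi_{k-1}''$ for $k=2,\dots,\lfloor(n-1)/2\rfloor$. (Primed/double-primed quantities refer to $u'$, $u''$, unprimed ones to $u$.)
   Context: Polar $n$-complex numbers: $u=x_0+h_1x_1+\cdots+h_{n-1}x_{n-1}$, $x_j\in\mathbb{R}$, $h_0=1$, with componentwise addition and bilinear multiplication $h_jh_k=h_{(j+k)\bmod n}$. Canonical variables: $v_+=\sum_{p=0}^{n-1}x_p$; for even $n$, $v_-=\sum_{p=0}^{n-1}(-1)^px_p$; for $k=1,\dots,\lfloor(n-1)/2\rfloor$, $v_k=\sum_p x_p\cos(2\pi kp/n)$, $\tilde v_k=\sum_p x_p\sin(2\pi kp/n)$, $\rho_k=\sqrt{v_k^2+\tilde v_k^2}$; when $\rho_k>0$ the azimuthal angle $\phi_k\in[0,2\pi)$ is defined by $\cos\phi_k=v_k/\rho_k$, $\sin\phi_k=\tilde v_k/\rho_k$. Polar angles: $\tan\theta_+=\sqrt2\rho_1/v_+$, and for even $n$, $\tan\theta_-=\sqrt2\rho_1/v_-$. Planar angles: $\tan\psi_{k-1}=\rho_1/\rho_k$ for $k=2,\dots,\lfloor(n-1)/2\rfloor$. Amplitude: if $\nu(u)>0$, $\rho=\nu(u)^{1/n}$. *)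

From HB Require Import structures.
From mathcomp Require Import all_boot all_order all_algebra.
From mathcomp Require Import all_classical all_reals all_analysis.
From mathcomp Require Import complex.
Set Implicit Arguments. Unset Strict Implicit. Unset Printing Implicit Defensive.
Import Order.TTheory GRing.Theory Num.Theory.
Local Open Scope ring_scope.

(* A polar n-complex number u = x_0 + h_1 x_1 + ... + h_{n-1} x_{n-1} is
   represented by its component function x : nat -> R; only x 0, ..., x (n-1)
   are meaningful. *)
Section PolarNComplex.
Variable R : realType.
Variable n : nat.

(* Product: h_j h_k = h_{(j+k) mod n}, bilinear. *)
Definition pmul (x y : nat -> R) : nat -> R :=
  fun p => \sum_(j < n) \sum_(k < n | ((j + k) %% n == p)%N) x j * y k.

Definition nu (x : nat -> R) : R :=
  \det (\matrix_(i < n, j < n) x ((i + n - j) %% n)%N).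

Definition vplus (x : nat -> R) : R := \sum_(p < n) x p.
Definition vminus (x : nat -> R) : R := \sum_(p < n) (-1) ^+ p * x p.
Definition vk (k : nat) (x : nat -> R) : R :=
  \sum_(p < n) x p * cos (2 * pi * k%:R * p%:R / n%:R).
Definition vtk (k : nat) (x : nat -> R) : R :=
  \sum_(p < n) x p * sin (2 * pi * k%:R * p%:R / n%:R).
Definition rhok (k : nat) (x : nat -> R) : R :=
  Num.sqrt (vk k x ^+ 2 + vtk k x ^+ 2).

(* phi is an (the) azimuthal angle phi_k of u (only meaningful if rho_k > 0) *)
Definition is_azimuth (k : nat) (x : nat -> R) (phi : R) : Prop :=
  0 <= phi < 2 * pi /\ cos phi = vk k x / rhok k x /\ sin phi = vtk k x / rhok k x.

Definition tan_theta_plus (x : nat -> R) : R :=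
  Num.sqrt 2 * rhok 1 x / vplus x.
Definition tan_theta_minus (x : nat -> R) : R :=
  Num.sqrt 2 * rhok 1 x / vminus x.
Definition tan_psi (k : nat) (x : nat -> R) : R := rhok 1 x / rhok k x.

Definition amplitude (x : nat -> R) : R := powR (nu x) (n%:R)^-1.

Definition epsk (k : nat) : R[i] :=
  Complex (cos (2 * pi * k%:R / n%:R)) (sin (2 * pi * k%:R / n%:R)).

Definition toC (a : R) : R[i] := Complex a 0.
End PolarNComplex.

(* The map x |-> z_k(x) = sum_p eps_k^p x_p evaluates the polynomial sum_p x_p X^p
   at the n-th root of unity eps_k; since polar n-complex multiplication is
   multiplication modulo X^n - 1, z_k is multiplicative, and every product rule
   follows from z_0 = v_+, z_(n/2) = v_- and z_k = v_k + i ~v_k.  The circulant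
   matrix of u is diagonalised by the Vandermonde matrix of the pairwise distinct
   eps_k, whence nu(u) = prod_k z_k; as z_(n-k) is the conjugate of z_k, pairing
   k with n - k gives the real factorisations of nu. *)

From HB Require Import structures.
From mathcomp Require Import all_boot all_order all_algebra.
From mathcomp Require Import all_classical all_reals all_analysis.
From mathcomp Require Import complex.
From mathcomp Require Import ring lra zify.
Set Implicit Arguments. Unset Strict Implicit. Unset Printing Implicit Defensive.
Import Order.TTheory GRing.Theory Num.Theory.
Local Open Scope ring_scope.
Local Open Scope complex_scope.

Section Trigonometry.
Variable R : realType.

Lemma cos_neq1_02pi (t : R) : 0 < t < 2 * pi -> cos t != 1.
Proof.
move=> /andP[t_gt0 t_lt2pi]; apply/eqP => cos_t.
have sin_half_gt0 : 0 < sin (t / 2) by apply: sin_gt0_pi; apply/andP; split; lra.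
have : sin (t / 2) ^+ 2 = 0.
  have double : t = (t / 2) *+ 2 by rewrite mulr2n; lra.
  by move: cos_t; rewrite {1}double cos_mulr2n mulr2n sin2cos2 => ?; lra.
by move/eqP; rewrite sqrf_eq0 gt_eqF.
Qed.

Lemma cos_sin_inj_02pi (a b : R) : 0 <= a < 2 * pi -> 0 <= b < 2 * pi ->
  cos a = cos b -> sin a = sin b -> a = b.
Proof.
move=> /andP[a_ge0 a_lt] /andP[b_ge0 b_lt] cos_ab sin_ab.
have cosB1 : cos (a - b) = 1 by rewrite cosB cos_ab sin_ab -!expr2 cos2Dsin2.
case: (ltgtP a b) => // ab.
- have : 0 < b - a < 2 * pi by apply/andP; split; lra.
  by move/cos_neq1_02pi; rewrite -opprB cosN cosB1 eqxx.
- have : 0 < a - b < 2 * pi by apply/andP; split; lra.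
  by move/cos_neq1_02pi; rewrite cosB1 eqxx.
Qed.

Lemma cos_sin_2pi_nat (k : nat) : cos (2 * pi * k%:R : R) = 1 /\ sin (2 * pi * k%:R : R) = 0.
Proof.
have -> : 2 * pi * k%:R = 0 + (pi *+ 2) *+ k :> R.
  by rewrite add0r mulr_natr mulr_natl.
by rewrite !periodicn ?cos0 ?sin0 //; [exact: sinD2pi | exact: cosD2pi].
Qed.

End Trigonometry.

Section Circulant.
Variables (F : idomainType) (n : nat) (w : 'I_n -> F).
Hypotheses (w_root : forall k, w k ^+ n = 1) (w_inj : injective w).

Lemma det_circulant (c : nat -> F) :
  \det (\matrix_(i < n, j < n) c ((i + n - j) %% n)%N) =
  \prod_(k < n) \sum_(p < n) w k ^+ p * c p.
Proof.
set A := \matrix_(i, j) _; set V := Vandermonde n (\row_k w k).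
set d := \row_k \sum_(p < n) w k ^+ p * c p.
have AV : A^T *m V = V *m diag_mx d.
  apply/matrixP => i k; rewrite mul_mx_diag !mxE.
  have n_gt0 : (0 < n)%N := leq_ltn_trans (leq0n i) (ltn_ord i).
  pose shift (p : 'I_n) : 'I_n := Ordinal (ltn_pmod (p + i) n_gt0).
  have shift_inj : injective shift.
    move=> p q /(congr1 val) /eqP; rewrite /= eqn_modDr !modn_small //.
    by move/eqP/val_inj.
  rewrite (reindex_inj shift_inj) mulr_sumr; apply: eq_bigr => p _.
  have unshift : (((p + i) %% n + n - i) %% n = p)%N.
    rewrite -addnBA ?(ltnW (ltn_ord i)) // modnDml -addnA subnKC ?(ltnW (ltn_ord i)) //.
    by rewrite modnDr modn_small.
  by rewrite !mxE /= unshift (expr_mod _ (w_root k)) exprD; ring.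
have detV_neq0 : \det V != 0.
  rewrite det_Vandermonde; apply/prodf_neq0 => a _; apply/prodf_neq0 => b ab.
  by rewrite !mxE subr_eq0; apply: contraTneq ab => /w_inj ->; rewrite ltnn.
apply: (mulIf detV_neq0).
have := congr1 determinant AV; rewrite det_mulmx det_tr det_mulmx det_diag => ->.
by rewrite mulrC; congr (_ * _); apply: eq_bigr => k _; rewrite mxE.
Qed.

End Circulant.

Lemma prod_pair_opposite (T : comPzSemiRingType) (G : nat -> T) m n :
  (m + m < n)%N ->
  \prod_(k < n) G k =
  G 0%N * \prod_(m.+1 <= k < n - m) G k * \prod_(1 <= k < m.+1) (G k * G (n - k)%N).
Proof.
move=> mn; rewrite -(big_mkord xpredT) big_ltn; last by lia.
rewrite (big_cat_nat _ (n := m.+1)) /=; try lia.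
rewrite (big_cat_nat _ (m := m.+1) (n := n - m)) /=; try lia.
have -> : \prod_(n - m <= k < n) G k = \prod_(1 <= k < m.+1) G (n - k)%N.
  rewrite -[(n - m)%N]add0n big_addn big_nat_rev big_add1 /=.
  rewrite subKn; last lia.
  by apply: eq_big_nat => k hk; congr G; lia.
by rewrite big_split /= mulrA mulrACA.
Qed.

Lemma root_of_unity_eval_pmul (R : realType) (n : nat) (T : comNzRingType)
    (f : {rmorphism R -> T}) (w : T) (x' x'' : nat -> R) :
  w ^+ n = 1 ->
  \sum_(p < n) w ^+ p * f (pmul n x' x'' p) =
  (\sum_(j < n) w ^+ j * f (x' j)) * (\sum_(k < n) w ^+ k * f (x'' k)).
Proof.
move=> w_root; rewrite big_distrlr /= /pmul.
under eq_bigr => p _ do rewrite rmorph_sum mulr_sumr.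
rewrite exchange_big /=; apply: eq_bigr => j _.
under eq_bigr => p _ do rewrite rmorph_sum mulr_sumr.
rewrite (exchange_big_dep xpredT) //=; apply: eq_bigr => k _.
have n_gt0 : (0 < n)%N := leq_ltn_trans (leq0n j) (ltn_ord j).
rewrite (big_pred1 (Ordinal (ltn_pmod (j + k) n_gt0))) => [|p]; last by rewrite /= eq_sym.
by rewrite /= (expr_mod _ w_root) exprD rmorphM mulrACA.
Qed.

Section RealToComplex.
Variable R : realType.

Lemma toCE (a : R) : toC a = a%:C. Proof. by []. Qed.

Lemma toC_inj : injective (@toC R). Proof. exact: complexI. Qed.

Lemma toCM (a b : R) : toC (a * b) = toC a * toC b.
Proof. exact: (rmorphM (real_complex R)). Qed.

Lemma toC_prod (r : seq nat) (F : nat -> R) :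
  toC (\prod_(i <- r) F i) = \prod_(i <- r) toC (F i).
Proof. exact: (rmorph_prod (real_complex R)). Qed.

End RealToComplex.

Section DiscreteFourier.
Variables (R : realType) (n : nat).
Hypothesis n_gt0 : (0 < n)%N.

Local Notation eps := (epsk R n).

Let n_neq0 : (n%:R : R) != 0. Proof. by rewrite pnatr_eq0 -lt0n. Qed.

Lemma epsk_expE k p : eps k ^+ p =
  Complex (cos (2 * pi * k%:R * p%:R / n%:R)) (sin (2 * pi * k%:R * p%:R / n%:R)).
Proof.
elim: p => [|p IHp]; first by rewrite expr0 !mulr0 !mul0r cos0 sin0.
have angleS : 2 * pi * k%:R * p.+1%:R / n%:R =
    2 * pi * k%:R / n%:R + 2 * pi * k%:R * p%:R / n%:R :> R.
  by rewrite -addn1 natrD; ring.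
by rewrite exprS IHp /epsk; simpc; rewrite angleS cosD sinD; congr Complex; ring.
Qed.

Lemma epsk_root k : eps k ^+ n = 1.
Proof.
by rewrite epsk_expE mulfK //; have [-> ->] := cos_sin_2pi_nat R k.
Qed.

Lemma epsk_inj : injective (fun k : 'I_n => eps k).
Proof.
have n_gt0R : (0 : R) < n%:R by rewrite ltr0n.
have angle_02pi (k : 'I_n) : 0 <= (2 * pi * k%:R / n%:R : R) < 2 * pi.
  have : 0 <= (k%:R / n%:R : R) < 1 by rewrite divr_ge0 // ltr_pdivrMr // mul1r ltr_nat /=.
  rewrite -!mulrA; move: (k%:R / n%:R) => r /andP[r_ge0 r_lt1].
  by have pi_pos := pi_gt0 R; apply/andP; split; nra.
have pi2_neq0 : 2 * pi != 0 :> R by rewrite mulf_neq0 ?pnatr_eq0 ?gt_eqF ?pi_gt0.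
move=> i j [cos_ij sin_ij]; apply: val_inj; apply/eqP; rewrite -(eqr_nat R); apply/eqP.
apply: (mulfI pi2_neq0); apply: (mulIf (invr_neq0 n_neq0)).
exact: cos_sin_inj_02pi (angle_02pi i) (angle_02pi j) cos_ij sin_ij.
Qed.

Definition dft (x : nat -> R) (k : nat) : R[i] := \sum_(p < n) eps k ^+ p * toC (x p).

Lemma dftE x k : dft x k = Complex (vk n k x) (vtk n k x).
Proof.
apply: (big_rec3 (fun z a b => z = Complex a b)) => [//|p z a b _ ->].
by rewrite epsk_expE /toC; simpc; congr Complex; ring.
Qed.

Lemma dft_mul_conj x k : dft x k * (dft x k)^* = toC (vk n k x ^+ 2 + vtk n k x ^+ 2).
Proof. by rewrite dftE /toC; simpc; congr Complex; ring. Qed.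

Lemma dft0 x : dft x 0 = toC (vplus n x).
Proof.
rewrite /dft /vplus toCE rmorph_sum; apply: eq_bigr => p _.
by rewrite /epsk !mulr0 !mul0r cos0 sin0 expr1n mul1r.
Qed.

Lemma dft_half x : ~~ odd n -> dft x n./2 = toC (vminus n x).
Proof.
move=> n_even.
have n_double : (n%:R : R) = 2 * (n./2)%:R.
  by rewrite -{1}(odd_double_half n) (negbTE n_even) add0n -muln2 natrM mulrC.
have eps_half : eps n./2 = -1.
  have half_neq0 : ((n./2)%:R : R) != 0.
    by apply: contraNneq n_neq0; rewrite n_double => ->; rewrite mulr0.
  have half_angle : 2 * pi * (n./2)%:R / n%:R = pi :> R by rewrite n_double; field.
  by rewrite /epsk half_angle cospi sinpi; apply/eqP; rewrite eq_complex /= oppr0 !eqxx.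
rewrite /dft /vminus eps_half toCE rmorph_sum; apply: eq_bigr => p _.
by rewrite rmorphM rmorphXn rmorphN1.
Qed.

Lemma dft_opp x k : (k <= n)%N -> dft x (n - k) = (dft x k)^*.
Proof.
move=> k_le_n.
have eps_opp : eps (n - k) = (eps k)^*.
  have opp_angle : 2 * pi * (n - k)%:R / n%:R = - (2 * pi * k%:R / n%:R) + pi *+ 2 :> R.
    by rewrite natrB //; field.
  by rewrite /epsk opp_angle cosD2pi sinD2pi cosN sinN.
rewrite /dft eps_opp rmorph_sum; apply: eq_bigr => p _.
by rewrite rmorphM rmorphXn /= /toC /= oppr0.
Qed.

Lemma nu_dft x : toC (nu n x) = \prod_(k < n) dft x k.
Proof.
rewrite toCE -det_map_mx (_ : map_mx _ _ = \matrix_(i, j) toC (x ((i + n - j) %% n)%N)).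
  exact: (det_circulant (fun k => epsk_root k) epsk_inj (fun p => toC (x p))).
by apply/matrixP => i j; rewrite !mxE.
Qed.

Lemma nu_even (x : nat -> R) : ~~ odd n ->
  nu n x = vplus n x * vminus n x * \prod_(1 <= k < n./2) (vk n k x ^+ 2 + vtk n k x ^+ 2).
Proof.
move=> n_even; set m := n./2.-1.
have n_eq : n = (m.+1 + m.+1)%N.
  by have := odd_double_half n; rewrite (negbTE n_even) add0n -addnn /m; lia.
apply: toC_inj; rewrite nu_dft (prod_pair_opposite _ (m := m)); last lia.
rewrite (_ : n - m = m.+2)%N; last lia.
rewrite big_nat1 (_ : m.+1 = n./2); last lia.
rewrite dft0 dft_half // !toCM toC_prod.
congr (_ * _); apply: eq_big_nat => k k_range.
by rewrite dft_opp ?dft_mul_conj //; lia.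
Qed.

Lemma nu_odd (x : nat -> R) : odd n ->
  nu n x = vplus n x * \prod_(1 <= k < (n.-1)./2.+1) (vk n k x ^+ 2 + vtk n k x ^+ 2).
Proof.
move=> n_odd; set m := (n.-1)./2.
have n_pred_even : ~~ odd n.-1 by move: n_odd; rewrite -{1}(prednK n_gt0).
have n_eq : n = (m + m).+1.
  by have := odd_double_half n.-1; rewrite (negbTE n_pred_even) add0n -addnn; lia.
apply: toC_inj; rewrite nu_dft (prod_pair_opposite _ (m := m)); last lia.
rewrite big_geq; last lia.
rewrite mulr1 dft0 toCM toC_prod.
congr (_ * _); apply: eq_big_nat => k k_range.
by rewrite dft_opp ?dft_mul_conj //; lia.
Qed.

End DiscreteFourier.

Section Multiplicativity.
Variables (R : realType) (n : nat) (x' x'' : nat -> R).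
Hypothesis n_gt0 : (0 < n)%N.
Let x := pmul n x' x''.

Lemma dft_pmul k : dft n x k = dft n x' k * dft n x'' k.
Proof. exact (root_of_unity_eval_pmul (real_complex R) x' x'' (epsk_root R n_gt0 k)). Qed.

Lemma vplus_pmul : vplus n x = vplus n x' * vplus n x''.
Proof. by apply: toC_inj; rewrite toCM -!dft0 dft_pmul. Qed.

Lemma vminus_pmul : ~~ odd n -> vminus n x = vminus n x' * vminus n x''.
Proof. by move=> n_even; apply: toC_inj; rewrite toCM -!dft_half ?dft_pmul. Qed.

Lemma vk_vtk_pmul k :
  vk n k x = vk n k x' * vk n k x'' - vtk n k x' * vtk n k x'' /\
  vtk n k x = vk n k x' * vtk n k x'' + vtk n k x' * vk n k x''.
Proof. by have := dft_pmul k; rewrite !dftE; simpc; case. Qed.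

Lemma rhok_pmul k : rhok n k x = rhok n k x' * rhok n k x''.
Proof.
rewrite /rhok -sqrtrM ?addr_ge0 ?sqr_ge0 //; have [-> ->] := vk_vtk_pmul k.
by congr Num.sqrt; ring.
Qed.

Lemma nu_pmul : nu n x = nu n x' * nu n x''.
Proof.
apply: toC_inj; rewrite toCM !nu_dft // -big_split /=.
by apply: eq_bigr => k _; exact: dft_pmul.
Qed.

Lemma amplitude_pmul : 0 < nu n x' -> 0 < nu n x'' ->
  amplitude n x = amplitude n x' * amplitude n x''.
Proof. by move=> nu'_gt0 nu''_gt0; rewrite /amplitude nu_pmul powRM ?ltW. Qed.

Lemma azimuth_pmul k phi phi' phi'' : 0 < rhok n k x' -> 0 < rhok n k x'' ->
  is_azimuth n k x phi -> is_azimuth n k x' phi' -> is_azimuth n k x'' phi'' ->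
  exists m : int, phi = phi' + phi'' + 2 * pi * m%:~R.
Proof.
move=> rho'_gt0 rho''_gt0 [phi_range [cos_phi sin_phi]].
move=> [/andP[phi'_ge0 phi'_lt] [cos' sin']] [/andP[phi''_ge0 phi''_lt] [cos'' sin'']].
have [cos_sum sin_sum] : cos phi = cos (phi' + phi'') /\ sin phi = sin (phi' + phi'').
  rewrite cosD sinD cos_phi sin_phi cos' sin' cos'' sin'' rhok_pmul.
  by have [-> ->] := vk_vtk_pmul k; split; field; rewrite !gt_eqF.
have two_pi : 2 * pi = pi *+ 2 :> R by rewrite mulr_natl.
(* phi' + phi'' lies in [0, 4 pi), so it is either phi or phi + 2 pi. *)
have [sum_lt | sum_ge] := ltP (phi' + phi'') (2 * pi).
  exists 0; rewrite mulr0 addr0; apply: cos_sin_inj_02pi => //.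
  by rewrite addr_ge0.
exists (-1); rewrite mulrN1; apply: cos_sin_inj_02pi => //.
- by apply/andP; split; lra.
- by rewrite cos_sum -[in RHS]cosD2pi -two_pi subrK.
- by rewrite sin_sum -[in RHS]sinD2pi -two_pi subrK.
Qed.

Let sqrt2_neq0 : Num.sqrt 2 != 0 :> R. Proof. by rewrite sqrtr_eq0 -ltNge. Qed.

Lemma tan_theta_plus_pmul : vplus n x' != 0 -> vplus n x'' != 0 ->
  tan_theta_plus n x = (Num.sqrt 2)^-1 * tan_theta_plus n x' * tan_theta_plus n x''.
Proof.
move=> v'_neq0 v''_neq0.
by rewrite /tan_theta_plus rhok_pmul vplus_pmul; field; rewrite sqrt2_neq0 v'_neq0 v''_neq0.
Qed.

Lemma tan_theta_minus_pmul : ~~ odd n -> vminus n x' != 0 -> vminus n x'' != 0 ->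
  tan_theta_minus n x = (Num.sqrt 2)^-1 * tan_theta_minus n x' * tan_theta_minus n x''.
Proof.
move=> n_even v'_neq0 v''_neq0.
by rewrite /tan_theta_minus rhok_pmul vminus_pmul //; field; rewrite sqrt2_neq0 v'_neq0 v''_neq0.
Qed.

Lemma tan_psi_pmul k : tan_psi n k x = tan_psi n k x' * tan_psi n k x''.
Proof. by rewrite /tan_psi !rhok_pmul invfM; ring. Qed.

End Multiplicativity.

Theorem mainTheorem7 (R : realType) (n : nat) (hn : (2 <= n)%N) :
  (forall x : nat -> R,
     toC (nu n x) = \prod_(k < n) \sum_(p < n) epsk R n k ^+ p * toC (x p)
     /\ (~~ odd n -> nu n x = vplus n x * vminus n x *
           \prod_(1 <= k < n./2) (vk n k x ^+ 2 + vtk n k x ^+ 2))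
     /\ (odd n -> nu n x = vplus n x *
           \prod_(1 <= k < (n.-1)./2.+1) (vk n k x ^+ 2 + vtk n k x ^+ 2)))
  /\
  (forall x' x'' : nat -> R,
     let x := pmul n x' x'' in
     vplus n x = vplus n x' * vplus n x''
     /\ (~~ odd n -> vminus n x = vminus n x' * vminus n x'')
     /\ (forall k : nat, (1 <= k <= (n.-1)./2)%N ->
           vk n k x = vk n k x' * vk n k x'' - vtk n k x' * vtk n k x''
           /\ vtk n k x = vk n k x' * vtk n k x'' + vtk n k x' * vk n k x''
           /\ rhok n k x = rhok n k x' * rhok n k x'')
     /\ nu n x = nu n x' * nu n x''
     /\ (0 < nu n x' -> 0 < nu n x'' ->
           amplitude n x = amplitude n x' * amplitude n x'')
     /\ (forall k : nat, (1 <= k <= (n.-1)./2)%N ->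
           0 < rhok n k x' -> 0 < rhok n k x'' ->
           forall phi phi' phi'' : R,
             is_azimuth n k x phi -> is_azimuth n k x' phi' ->
             is_azimuth n k x'' phi'' ->
             exists m : int, phi = phi' + phi'' + 2 * pi * m%:~R)
     /\ ((1 <= (n.-1)./2)%N -> vplus n x' != 0 -> vplus n x'' != 0 ->
           tan_theta_plus n x =
             (Num.sqrt 2)^-1 * tan_theta_plus n x' * tan_theta_plus n x'')
     /\ (~~ odd n -> (1 <= (n.-1)./2)%N -> vminus n x' != 0 -> vminus n x'' != 0 ->
           tan_theta_minus n x =
             (Num.sqrt 2)^-1 * tan_theta_minus n x' * tan_theta_minus n x'')
     /\ (forall k : nat, (2 <= k <= (n.-1)./2)%N ->
           0 < rhok n k x' -> 0 < rhok n k x'' ->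
           tan_psi n k x = tan_psi n k x' * tan_psi n k x'')).
Proof.
have n_gt0 : (0 < n)%N by apply: ltnW.
split=> [x | x' x'' x].
  by split; [exact: nu_dft | split; [exact: nu_even | exact: nu_odd]].
split; first exact: vplus_pmul.
split; first exact: vminus_pmul.
split.
  move=> k _; have [-> ->] := vk_vtk_pmul x' x'' n_gt0 k.
  by split => //; split => //; exact: rhok_pmul.
split; first exact: nu_pmul.
split; first exact: amplitude_pmul.
split; first by move=> k _ rho'_gt0 rho''_gt0 phi phi' phi''; exact: azimuth_pmul.
split; first by move=> _; exact: tan_theta_plus_pmul.
split; first by move=> n_even _; exact: tan_theta_minus_pmul.
by move=> k _ _ _; exact: tan_psi_pmul.
Qed.
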